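(* For every integer $m\geq 3$, the complete sun $KS_m$ satisfies $\eta(KS_m)=\lceil (m+2)/3\rceil$.
   Context: All graphs are finite, simple and undirected. Indices are taken modulo $m$, so $u_0=u_m$ and $v_0=v_m$. The complete sun $KS_m$ has vertices $u_1,\dots,u_m,v_1,\dots,v_m$, where $\{u_1,\dots,u_m\}$ is a clique, and additional edges $(u_i,v_{i-1}),(u_i,v_i)$ for all $i\in[m]$ (so each $v_i$ is adjacent exactly to $u_i$ and $u_{i+1}$). For a vertex $v$, $N(v)$ is its set of neighbours. For a positive integer $k$, $[k]=\{1,\dots,k\}$. For a labeling $f:V(G)\to[k]$ and $S\subseteq V(G)$, $f(S)=\sum_{u\in S}f(u)$. A labeling $f:V(G)\to[k]$ is an additive $k$-coloring if $f(N(u))\neq f(N(v))$ for every edge $(u,v)$ of $G$. The additive chromatic number $\eta(G)$ is the least $k$ for which $G$ has an additive $k$-coloring. *)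

From mathcomp Require Import all_boot.
Set Implicit Arguments. Unset Strict Implicit. Unset Printing Implicit Defensive.

Definition simple_graph (T : finType) (e : rel T) : Prop :=
  symmetric e /\ irreflexive e.

Definition nbr_sum (T : finType) (e : rel T) (f : T -> nat) (u : T) : nat :=
  \sum_(w : T | e u w) f w.

Definition additive_coloring (T : finType) (e : rel T) (k : nat) (f : T -> nat) : Prop :=
  (forall x, 1 <= f x <= k) /\
  (forall u v, e u v -> nbr_sum e f u <> nbr_sum e f v).

Definition has_additive_coloring (T : finType) (e : rel T) (k : nat) : Prop :=
  exists f : T -> nat, additive_coloring e k f.

Definition additive_chromatic_number (T : finType) (e : rel T) (k : nat) : Prop :=
  has_additive_coloring e k /\ (forall k', has_additive_coloring e k' -> k <= k').

(* Complete sun KS_m, 0-indexed: inl i = u_(i+1), inr i = v_(i+1).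
   u's form a clique; v_i adjacent exactly to u_i and u_(i+1 mod m). *)
Definition KS_vertex (m : nat) := ('I_m + 'I_m)%type.

Definition KS_adj (m : nat) (x y : KS_vertex m) : bool :=
  match x, y with
  | inl i, inl j => i != j
  | inl i, inr j => (nat_of_ord i == nat_of_ord j) || (nat_of_ord i == (j.+1 %% m))
  | inr j, inl i => (nat_of_ord i == nat_of_ord j) || (nat_of_ord i == (j.+1 %% m))
  | inr _, inr _ => false
  end.

From mathcomp Require Import all_boot zify.
Set Implicit Arguments. Unset Strict Implicit. Unset Printing Implicit Defensive.

(* Write S for the sum of the labels of the clique u_1..u_m.  Then
   f(N(u_i)) = S - f(u_i) + f(v_(i-1)) + f(v_i), and these m values are pairwise
   distinct because the u_i are pairwise adjacent; they lie in a window of 3k - 2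
   integers, hence m <= 3k - 2.  Conversely, whenever m + 2 <= 3k <= m + 4 there are
   labels making f(v_(i-1)) + f(v_i) - f(u_i) injective in i while S is so large that
   every f(N(u_i)) exceeds 2k >= f(N(v_j)). *)

Lemma big_pred2_eq (T : finType) (F : T -> nat) (p q : T) : p != q ->
  \sum_(j | (j == p) || (j == q)) F j = F p + F q.
Proof.
move=> pq; rewrite (bigD1 p) ?eqxx //=; congr (_ + _).
apply: big_pred1 => j /=; case: (eqVneq j p) => [->|_]; last by rewrite andbT.
by rewrite (negbTE pq).
Qed.

Lemma card_le_of_injective_window (T : finType) (X : T -> nat) a b :
  injective X -> (forall x, a <= X x < a + b) -> #|T| <= b.
Proof.
move=> X_inj X_win; rewrite cardE -(size_map X) -(size_iota a b).
apply: uniq_leq_size; first by rewrite (map_inj_uniq X_inj) enum_uniq.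
by move=> _ /mapP [x _ ->]; rewrite mem_iota X_win.
Qed.

Lemma leq_sum_ord3 n (A : nat -> nat) : (forall j, 1 <= A j) ->
  A 0 + A 1 + A 2 + n <= \sum_(j < n.+3) A j.
Proof.
move=> A_pos; rewrite !big_ord_recl -!addnA !leq_add2l.
by rewrite -[n in n <= _]card_ord -sum1_card; apply: leq_sum.
Qed.

Section SunNeighbourhoods.

Variable m : nat.
Hypothesis m_gt1 : 1 < m.

Lemma ordS_neq (j : 'I_m) : ordS j != j.
Proof.
apply/eqP => /(congr1 val) /=; move: (nat_of_ord j) (ltn_ord j) => x.
rewrite leq_eqVlt => /orP [/eqP x_succ|x_lt]; last by rewrite modn_small //; lia.
by rewrite x_succ modnn; lia.
Qed.

Lemma val_ord_pred (i : 'I_m) :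
  ord_pred i = (if i == 0 :> nat then m.-1 else i.-1) :> nat.
Proof.
rewrite /= -subn1; case: eqP => [->|i_neq0]; first by rewrite add0n modn_small; lia.
have -> : i + m - 1 = i.-1 + m by lia.
by rewrite modnDr modn_small; have := ltn_ord i; lia.
Qed.

Lemma KS_adj_uv (i j : 'I_m) : KS_adj (inl i) (inr j) = (j == i) || (j == ord_pred i).
Proof.
by rewrite /= [j == i]eq_sym -(can2_eq (@ordSK m) (@ord_predK m)) [ordS j == i]eq_sym.
Qed.

Lemma KS_nbr_sum_u (f : KS_vertex m -> nat) (i : 'I_m) :
  nbr_sum (@KS_adj m) f (inl i) + f (inl i)
  = \sum_(j < m) f (inl j) + (f (inr i) + f (inr (ord_pred i))).
Proof.
have i_neq_pred : i != ord_pred i.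
  by rewrite -{1}(ord_predK i) ordS_neq.
rewrite /nbr_sum big_sumType (eq_bigl _ _ (KS_adj_uv i)) big_pred2_eq //.
rewrite [in RHS](bigD1 i) //= (eq_bigl (fun j => j != i)) => [|j]; last first.
  by rewrite /= eq_sym.
by rewrite addnAC [f (inl i) + _]addnC.
Qed.

Lemma KS_nbr_sum_v (f : KS_vertex m -> nat) (j : 'I_m) :
  nbr_sum (@KS_adj m) f (inr j) = f (inl j) + f (inl (ordS j)).
Proof.
rewrite /nbr_sum big_sumType /= big_pred0_eq addn0.
by rewrite -(big_pred2_eq (fun i => f (inl i))) // eq_sym ordS_neq.
Qed.

Lemma KS_additive_coloring_lb k f :
  additive_coloring (@KS_adj m) k f -> m <= 3 * k - 2.
Proof.
move=> [f_range f_sep].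
set S := \sum_(j < m) f (inl j).
pose X (i : 'I_m) := nbr_sum (@KS_adj m) f (inl i) + k.
have X_inj : injective X.
  move=> i j /addIn X_ij; apply/eqP/negPn/negP => i_neq_j.
  exact: (f_sep (inl i) (inl j)).
rewrite -[m]card_ord; apply: (card_le_of_injective_window (a := S + 2) X_inj) => i.
have := KS_nbr_sum_u f i; rewrite -/S /X.
have := f_range (inl i); have := f_range (inr i); have := f_range (inr (ord_pred i)).
move: (nbr_sum _ f _) (f (inl i)) (f (inr i)) (f (inr (ord_pred i))); lia.
Qed.

End SunNeighbourhoods.

Section SunColoring.

Variables m k : nat.
Hypothesis m_ge3 : 3 <= m.
Hypothesis k_window : m + 2 <= 3 * k <= m + 4.

(* Consecutive v-labels sum to j + 3 - k once j >= k - 1.  The u-labels compensate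
   for that staircase so that v_(i-1) + v_i + k - u_i is the injective [sun_offset i];
   the value t.+1 at i = 0 is forced by the wrap-around label v_(m-1). *)
Definition sun_v_label (j : nat) : nat := maxn 1 ((j + 4 - k) %/ 2).

Let t := sun_v_label m.-1 + k - 1.

Let t_ge3 : 3 <= t. Proof. rewrite /t /sun_v_label; lia. Qed.
Let t_ge_k : k <= t. Proof. rewrite /t /sun_v_label; lia. Qed.

Definition sun_u_label (j : nat) : nat :=
  if j == 0 then 1 else if j < t then maxn 2 (k.+1 - j) else 1.

Definition sun_offset (i : nat) : nat :=
  if i == 0 then t.+1 else if i < t then i.+1 else i.+2.

Definition sun_label (x : KS_vertex m) : nat :=
  match x with inl i => sun_u_label i | inr j => sun_v_label j end.

Lemma sun_u_label_bounds j : 1 <= sun_u_label j <= k.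
Proof. rewrite /sun_u_label; case: eqP => j0; first lia; case: (ltnP j t) => ?; lia. Qed.

Lemma sun_v_label_bounds j : j < m -> 1 <= sun_v_label j <= k.
Proof. rewrite /sun_v_label; lia. Qed.

Lemma sun_offset_inj : injective sun_offset.
Proof.
move=> i j; rewrite /sun_offset.
by case: (i =P 0) => ?; case: (j =P 0) => ?; case: (ltnP i t) => ?; case: (ltnP j t) => ?; lia.
Qed.

Lemma sun_offset_ge2 i : 2 <= sun_offset i.
Proof. rewrite /sun_offset; case: eqP => i0; first lia; case: (ltnP i t) => ?; lia. Qed.

Lemma sun_offsetE (i : 'I_m) :
  sun_v_label i + sun_v_label (ord_pred i) + k = sun_u_label i + sun_offset i.
Proof.
rewrite val_ord_pred; last lia.
rewrite /sun_u_label /sun_offset /sun_v_label; case: eqP => [->|i_neq0].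
  by rewrite /t /sun_v_label; lia.
by case: (ltnP i t) => ?; lia.
Qed.

Lemma sun_u_label_sum : 3 * k - 1 <= \sum_(j < m) sun_u_label j.
Proof.
have [n m_eq] : exists n, m = n.+3 by exists (m - 3); lia.
have u_pos j : 1 <= sun_u_label j by have := sun_u_label_bounds j; lia.
have t_gt1 : 1 < t by lia.
rewrite m_eq; apply: leq_trans (leq_sum_ord3 n u_pos).
rewrite /sun_u_label /= t_gt1 t_ge3; lia.
Qed.

Lemma KS_sun_label_additive : additive_coloring (@KS_adj m) k sun_label.
Proof.
have m_gt1 : 1 < m by lia.
have label_bounds x : 1 <= sun_label x <= k.
  by case: x => [i|j]; [exact: sun_u_label_bounds | exact: sun_v_label_bounds].
split=> //.
have nbr_u i : nbr_sum (@KS_adj m) sun_label (inl i) + k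
               = \sum_(j < m) sun_u_label j + sun_offset i.
  by have := KS_nbr_sum_u m_gt1 sun_label i; have := sun_offsetE i; rewrite /=; lia.
have nbr_v j : nbr_sum (@KS_adj m) sun_label (inr j) <= 2 * k.
  have label_le x : sun_label x <= k by case/andP: (label_bounds x).
  by rewrite KS_nbr_sum_v // mul2n -addnn leq_add.
have nbr_v_lt_u i j :
    nbr_sum (@KS_adj m) sun_label (inr j) < nbr_sum (@KS_adj m) sun_label (inl i).
  by have := nbr_u i; have := nbr_v j; have := sun_offset_ge2 i; have := sun_u_label_sum; lia.
move=> [i|j] [i'|j'] //= adj.
- move: adj => /eqP; apply: contra_not => nbr_eq; apply/val_inj/sun_offset_inj.
  by apply: (@addnI (\sum_(j < m) sun_u_label j)); rewrite -!nbr_u nbr_eq.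
- by apply/eqP; rewrite gtn_eqF ?nbr_v_lt_u.
- by apply/eqP; rewrite ltn_eqF ?nbr_v_lt_u.
Qed.

End SunColoring.

Theorem mainTheorem14 (m : nat) : 3 <= m ->
  additive_chromatic_number (@KS_adj m) ((m + 4) %/ 3).
Proof.
move=> m_ge3; split.
  exists (@sun_label m ((m + 4) %/ 3)); apply: KS_sun_label_additive => //; lia.
move=> k [f f_additive]; have m_gt1 : 1 < m by lia.
have := KS_additive_coloring_lb m_gt1 f_additive; lia.
Qed.
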